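(* Let $R$ be a ring and $n\ge 2$. Then $R$ is almost Armendariz if and only if $R[x]/\langle x^n\rangle$ is almost Armendariz.
   Context: All rings are associative with identity. For a ring $R$, $P(R)$ denotes the prime radical of $R$ (the intersection of all prime ideals of $R$, equivalently the set of strongly nilpotent elements of $R$). A ring $R$ is called almost Armendariz if whenever $f(x)=\sum_{i=0}^m a_ix^i$ and $g(x)=\sum_{j=0}^n b_jx^j\in R[x]$ satisfy $f(x)g(x)=0$, then $a_ib_j\in P(R)$ for all $0\le i\le m$, $0\le j\le n$. $\langle x^n\rangle$ is the ideal of $R[x]$ generated by $x^n$. *)

From HB Require Import structures.
From mathcomp Require Import all_boot all_order all_algebra.
Set Implicit Arguments. Unset Strict Implicit. Unset Printing Implicit Defensive.
Import GRing.Theory.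
Local Open Scope ring_scope.

Definition is_ideal (R : nzRingType) (I : R -> Prop) : Prop :=
  [/\ I 0,
      (forall x y, I x -> I y -> I (x - y)) &
      (forall r x, I x -> I (r * x) /\ I (x * r))].

(* prime ideal: proper two-sided ideal P such that for all ideals A, B,
   A B <= P implies A <= P or B <= P  (A B <= P iff all products a b lie in P,
   since P is an additive subgroup). *)
Definition is_prime_ideal (R : nzRingType) (P : R -> Prop) : Prop :=
  [/\ is_ideal P, ~ P 1 &
      forall A B : R -> Prop, is_ideal A -> is_ideal B ->
        (forall a b, A a -> B b -> P (a * b)) ->
        (forall a, A a -> P a) \/ (forall b, B b -> P b)].

Definition prime_radical (R : nzRingType) (x : R) : Prop :=
  forall P : R -> Prop, is_prime_ideal P -> P x.

Definition almost_armendariz (R : nzRingType) : Prop :=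
  forall f g : {poly R}, f * g = 0 ->
    forall i j : nat, prime_radical (f`_i * g`_j).

(* Carrier: polynomials of size <= N where N := n.-1.+1 (= n for n >= 1);
   product = truncation of the polynomial product below degree N.
   For n >= 1 this is exactly R[x]/<x^n> (the classes of x^k, k < n, form a
   basis); n = 0 is a junk value (like 'Z_0), excluded by the theorem. *)

Section TruncPoly.
Variables (R : nzRingType) (n : nat).
Local Notation N := n.-1.+1.

Definition trunc_poly : predArgType := npoly R N.
HB.instance Definition _ := GRing.Zmodule.on trunc_poly.

Lemma take_polyMl_aux m (a b : {poly R}) :
  take_poly m (take_poly m a * b) = take_poly m (a * b).
Proof.
rewrite -{2}(poly_take_drop m a) mulrDl take_polyD.
by rewrite -mulrA -(commr_polyXn b m) mulrA take_polyMXn_0 addr0.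
Qed.

Lemma take_polyMr_aux m (a b : {poly R}) :
  take_poly m (a * take_poly m b) = take_poly m (a * b).
Proof.
rewrite -{2}(poly_take_drop m b) mulrDr take_polyD.
by rewrite mulrA take_polyMXn_0 addr0.
Qed.

Definition tp_of (p : {poly R}) : trunc_poly :=
  NPoly (size_take_poly N p : take_poly N p \is a poly_of_size N).

Definition tp_mul (p q : trunc_poly) : trunc_poly := tp_of (val p * val q).
Definition tp_one : trunc_poly := tp_of 1.

Lemma tp_val_of p : val (tp_of p) = take_poly N p. Proof. by []. Qed.

Lemma tp_val_id (p : trunc_poly) : take_poly N (val p) = val p.
Proof. exact: take_poly_id (size_npoly p). Qed.

Fact tp_mulA : associative tp_mul.
Proof.
move=> x y z; apply: val_inj; rewrite /tp_mul /=.
by rewrite take_polyMl_aux take_polyMr_aux mulrA.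
Qed.

Fact tp_mul1l : left_id tp_one tp_mul.
Proof.
move=> x; apply: val_inj; rewrite /tp_mul /tp_one /=.
by rewrite take_polyMl_aux mul1r tp_val_id.
Qed.

Fact tp_mul1r : right_id tp_one tp_mul.
Proof.
move=> x; apply: val_inj; rewrite /tp_mul /tp_one /=.
by rewrite take_polyMr_aux mulr1 tp_val_id.
Qed.

Fact tp_mulDl : left_distributive tp_mul +%R.
Proof.
move=> x y z; apply: val_inj; rewrite /tp_mul /= /=.
by rewrite mulrDl take_polyD.
Qed.

Fact tp_mulDr : right_distributive tp_mul +%R.
Proof.
move=> x y z; apply: val_inj; rewrite /tp_mul /= /=.
by rewrite mulrDr take_polyD.
Qed.

Fact tp_one_neq0 : tp_one != 0.
Proof.
apply/eqP => /(congr1 val) /= /(congr1 (fun p : {poly R} => p`_0)).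
by rewrite coef_take_poly /= coef1 coef0 => /eqP; rewrite oner_eq0.
Qed.

HB.instance Definition _ := GRing.Zmodule_isNzRing.Build trunc_poly
  tp_mulA tp_mul1l tp_mul1r tp_mulDl tp_mulDr tp_one_neq0.

End TruncPoly.

From HB Require Import structures.
From mathcomp Require Import all_boot all_order all_algebra zify.
Set Implicit Arguments. Unset Strict Implicit. Unset Printing Implicit Defensive.
Import GRing.Theory.
Local Open Scope ring_scope.

(* Evaluation at [x = 0] is a ring retraction [pi : R[x]/<x^n> -> R] of the
   constant embedding [c : R -> R[x]/<x^n>], and its kernel [x R[x]/<x^n>] is
   nilpotent, hence contained in every prime ideal.  Mapping polynomials
   coefficientwise along [c] transfers the almost Armendariz property down to
   [R], mapping along [pi] transfers it up: primes of [R] pull back to primes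
   along the surjection [pi], and, because the kernel lies in every prime,
   primes of [R[x]/<x^n>] push forward to primes, so [pi] reflects the prime
   radical. *)

Lemma idealD (T : nzRingType) (I : T -> Prop) :
  is_ideal I -> forall x y, I x -> I y -> I (x + y).
Proof.
case=> I0 IB _ x y Ix Iy.
by have := IB x (0 - y) Ix (IB _ _ I0 Iy); rewrite sub0r opprK.
Qed.

Section NilFiltration.
Variables (T : nzRingType) (J : nat -> T -> Prop) (m : nat).
Hypothesis J_ideal : forall k, is_ideal (J k).
Hypothesis J_mul : forall a b x y, J a x -> J b y -> J (a + b) (x * y).
Hypothesis J_anti : forall a b x, (b <= a)%N -> J a x -> J b x.
Hypothesis J_top : forall x, J m x -> x = 0.

Lemma nil_filtration_sub_prime (P : T -> Prop) : is_prime_ideal P ->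
  forall k x, (0 < k)%N -> J k x -> P x.
Proof.
case=> [[P0 _ _] _ P_prime].
suff sub_d d k : (m <= k + d)%N -> (0 < k)%N -> forall x, J k x -> P x.
  by move=> k x k_gt0; apply: (sub_d m); rewrite ?leq_addl.
elim: d k => [|d IHd] k le_m k_gt0 x Jx.
  by rewrite addn0 in le_m; rewrite (J_top (J_anti le_m Jx)).
(* [J k * J k] lies in [J (k + k)], which lies in [P] by induction. *)
have JkJk_sub : forall y z, J k y -> J k z -> P (y * z).
  by move=> y z Jy Jz; apply: (IHd (k + k)) => //; [lia | lia | exact: J_mul].
by case: (P_prime _ _ (J_ideal k) (J_ideal k) JkJk_sub); apply.
Qed.

End NilFiltration.

Section Retraction.
Variables (S R : nzRingType) (f : {rmorphism S -> R}) (g : {rmorphism R -> S}).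
Hypothesis gK : cancel g f.

Definition image_pred (A : S -> Prop) (r : R) := exists2 s, A s & f s = r.

Lemma ideal_preimage (B : R -> Prop) : is_ideal B -> is_ideal (fun s => B (f s)).
Proof.
case=> B0 BB BM; split; first by rewrite rmorph0.
  by move=> x y; rewrite rmorphB; apply: BB.
by move=> r x; rewrite !rmorphM; apply: BM.
Qed.

Lemma ideal_image (A : S -> Prop) : is_ideal A -> is_ideal (image_pred A).
Proof.
case=> A0 AB AM; split; first by exists 0; rewrite ?rmorph0.
  move=> _ _ [x Ax <-] [y Ay <-].
  by exists (x - y); [exact: AB | rewrite rmorphB].
move=> r _ [x Ax <-]; have [AgrX AXgr] := AM (g r) x Ax.
by split; [exists (g r * x) | exists (x * g r)]; rewrite // rmorphM gK.
Qed.

Lemma prime_preimage (P : R -> Prop) :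
  is_prime_ideal P -> is_prime_ideal (fun s => P (f s)).
Proof.
case=> P_ideal P1 P_prime; split; first exact: ideal_preimage.
  by rewrite rmorph1.
move=> A B A_ideal B_ideal AB_sub.
have fAB_sub a b : image_pred A a -> image_pred B b -> P (a * b).
  by move=> [x Ax <-] [y By <-]; rewrite -rmorphM; apply: AB_sub.
case: (P_prime _ _ (ideal_image A_ideal) (ideal_image B_ideal) fAB_sub) => sub.
  by left=> x Ax; apply: sub; exists x.
by right=> y By; apply: sub; exists y.
Qed.

Lemma prime_radical_morph s : prime_radical s -> prime_radical (f s).
Proof. by move=> rad_s P P_prime; apply: rad_s (prime_preimage P_prime). Qed.

Lemma almost_armendariz_retract : almost_armendariz S -> almost_armendariz R.
Proof.
move=> armS p q pq0 i j.
have := armS (map_poly g p) (map_poly g q).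
rewrite -rmorphM pq0 rmorph0 => /(_ erefl i j).
by rewrite !coef_map -rmorphM => /prime_radical_morph; rewrite gK.
Qed.

Hypothesis ker_sub_prime :
  forall Q : S -> Prop, is_prime_ideal Q -> forall s, f s = 0 -> Q s.

Section PrimeImage.
Variable Q : S -> Prop.
Hypothesis Q_prime : is_prime_ideal Q.

Lemma prime_saturated s : image_pred Q (f s) -> Q s.
Proof.
move=> [q Qq fq]; have [Q_ideal _ _] := Q_prime.
have ker_sq : f (s - q) = 0 by rewrite rmorphB fq subrr.
by rewrite -(subrK q s); apply: idealD (ker_sub_prime Q_prime ker_sq) Qq.
Qed.

Lemma prime_image : is_prime_ideal (image_pred Q).
Proof.
have [Q_ideal Q1 Q_prime'] := Q_prime.
split; first exact: ideal_image.
  by rewrite -(rmorph1 f) => /prime_saturated.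
move=> A B A_ideal B_ideal AB_sub.
have fAB_sub x y : A (f x) -> B (f y) -> Q (x * y).
  by move=> Ax By; apply: prime_saturated; rewrite rmorphM; apply: AB_sub.
have [sub|sub] := Q_prime' _ _ (ideal_preimage A_ideal) (ideal_preimage B_ideal)
  fAB_sub; [left | right] => r; rewrite -(gK r) => ?; by exists (g r); auto.
Qed.

End PrimeImage.

Lemma prime_radical_reflect s : prime_radical (f s) -> prime_radical s.
Proof.
by move=> rad_fs Q Q_prime; apply: prime_saturated (rad_fs _ (prime_image Q_prime)).
Qed.

Lemma almost_armendariz_nil_kernel : almost_armendariz R -> almost_armendariz S.
Proof.
move=> armR p q pq0 i j.
have := armR (map_poly f p) (map_poly f q).
rewrite -rmorphM pq0 rmorph0 => /(_ erefl i j).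
by rewrite !coef_map -rmorphM; apply: prime_radical_reflect.
Qed.

End Retraction.

Section TruncPolyRetraction.
Variables (R : nzRingType) (n : nat).
Local Notation N := n.-1.+1.
Local Notation S := (trunc_poly R n).

Lemma tp_valB (s t : S) : val (s - t) = val s - val t. Proof. by []. Qed.

Lemma tp_valM (s t : S) : val (s * t) = take_poly N (val s * val t).
Proof. by []. Qed.

Definition tp_eval0 (s : S) : R := (val s)`_0.
Definition tp_const (r : R) : S := tp_of n r%:P.

Lemma tp_val_const r : val (tp_const r) = r%:P.
Proof. by rewrite tp_val_of take_poly_id // size_polyC; case: (r != 0). Qed.

Fact tp_eval0_is_zmod_morphism : zmod_morphism tp_eval0.
Proof. by move=> s t; rewrite /tp_eval0 tp_valB coefB. Qed.

Fact tp_eval0_is_monoid_morphism : monoid_morphism tp_eval0.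
Proof.
split; first by rewrite /tp_eval0 tp_val_of coef_take_poly coef1.
by move=> s t; rewrite /tp_eval0 tp_valM coef_take_poly coef0M.
Qed.

HB.instance Definition _ := GRing.isZmodMorphism.Build S R tp_eval0
  tp_eval0_is_zmod_morphism.
HB.instance Definition _ := GRing.isMonoidMorphism.Build S R tp_eval0
  tp_eval0_is_monoid_morphism.

Fact tp_const_is_zmod_morphism : zmod_morphism tp_const.
Proof. by move=> r t; apply: val_inj; rewrite tp_valB !tp_val_const polyCB. Qed.

Fact tp_const_is_monoid_morphism : monoid_morphism tp_const.
Proof.
split; first by apply: val_inj; rewrite tp_val_const.
move=> r t; apply: val_inj; rewrite tp_valM !tp_val_const -polyCM.
by rewrite take_poly_id // size_polyC; case: (_ != 0).
Qed.

HB.instance Definition _ := GRing.isZmodMorphism.Build R S tp_const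
  tp_const_is_zmod_morphism.
HB.instance Definition _ := GRing.isMonoidMorphism.Build R S tp_const
  tp_const_is_monoid_morphism.

Lemma tp_constK : cancel tp_const tp_eval0.
Proof. by move=> r; rewrite /tp_eval0 tp_val_const coefC. Qed.

Definition vanishes_below k (s : S) := forall i, (i < k)%N -> (val s)`_i = 0.

Lemma vanishes_belowM a b s t :
  vanishes_below a s -> vanishes_below b t -> vanishes_below (a + b) (s * t).
Proof.
move=> sa tb i lt_i; rewrite tp_valM coef_take_poly; case: ifP => // _.
rewrite coefM big1 // => j _.
have [lt_ja|le_aj] := ltnP j a; first by rewrite sa // mul0r.
by rewrite tb ?mulr0 //; have := ltn_ord j; lia.
Qed.

Lemma vanishes_below_anti a b s :
  (b <= a)%N -> vanishes_below a s -> vanishes_below b s.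
Proof. by move=> le_ba sa i lt_ib; apply: sa; apply: leq_trans le_ba. Qed.

Lemma vanishes_below_ideal k : is_ideal (vanishes_below k).
Proof.
split; first by move=> i _; rewrite coef0.
  by move=> s t sk tk i lt_ik; rewrite tp_valB coefB sk ?tk ?subr0.
move=> r s sk; split; first exact: (vanishes_belowM (a := 0)).
by rewrite -[k]addn0; apply: vanishes_belowM.
Qed.

Lemma vanishes_below_size s : vanishes_below N s -> s = 0.
Proof.
move=> sN; apply: val_inj; apply/polyP => i; rewrite coef0.
have [lt_iN|le_Ni] := ltnP i N; first exact: sN.
by rewrite nth_default // (leq_trans (size_npoly s)).
Qed.

Lemma tp_eval0_ker_sub_prime (Q : S -> Prop) :
  is_prime_ideal Q -> forall s, tp_eval0 s = 0 -> Q s.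
Proof.
move=> Q_prime s s0; apply: (nil_filtration_sub_prime vanishes_below_ideal
  vanishes_belowM vanishes_below_anti vanishes_below_size Q_prime (k := 1)) => //.
by case=> // _; rewrite -/(tp_eval0 s) s0.
Qed.

End TruncPolyRetraction.

Theorem theorem2p1 (R : nzRingType) (n : nat) (hn : (2 <= n)%N) :
  almost_armendariz R <-> almost_armendariz (trunc_poly R n).
Proof.
split.
- exact: almost_armendariz_nil_kernel (@tp_constK R n) (@tp_eval0_ker_sub_prime R n).
- exact: almost_armendariz_retract (@tp_constK R n).
Qed.
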